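(* For every $p\in\mathbb{H}_1[X]$, the degree $\deg(p)$ is integral (or $-\infty$ for $p=0$). Furthermore, for all $p,q\in\mathbb{H}_1[X]$, $\deg(p\cdot q)=\deg(p)+\deg(q)$.
   Context: $\mathbb{H}$ is the skew-field of real quaternions (basis $1,i,j,k$, $i^2=j^2=k^2=ijk=-1$, $ij=-ji=k$ and cyclic permutations); for $a=a_0+ia_1+ja_2+ka_3$ write $\Re(a)=a_0$, $\Im_i(a)=a_1$, $\Im_j(a)=a_2$, $\Im_k(a)=a_3$. The set $\mathbb{H}^{\mathbb{H}}$ of all maps $\mathbb{H}\to\mathbb{H}$ is a ring under pointwise addition and multiplication; identify $a\in\mathbb{H}$ with the constant map $x\mapsto a$ and let $X$ be the identity map. $\mathbb{H}_1[X]$ is the smallest subring of $\mathbb{H}^{\mathbb{H}}$ containing $X$ and all constant maps (e.g. $a_1+X a_2 X X a_3 + a_4 XXX a_5$). For $f\in\mathbb{H}_1[X]$ define real four-variate functions $\tilde f_0,\ldots,\tilde f_3$ by $\tilde f_0(X_0,\ldots,X_3)=\Re(f(X_0+iX_1+jX_2+kX_3))$, $\tilde f_1=\Im_i(f(\cdot))$, $\tilde f_2=\Im_j(f(\cdot))$, $\tilde f_3=\Im_k(f(\cdot))$; these are real polynomials in $X_0,\ldots,X_3$. The degree of $f\in\mathbb{H}_1[X]$ is defined as $\deg(f):=\tfrac12\deg(\tilde f_0^2+\tilde f_1^2+\tilde f_2^2+\tilde f_3^2)$, where on the right $\deg$ is total degree of a real four-variate polynomial (with $\deg(0)=-\infty$).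 *)

From HB Require Import structures.
From mathcomp Require Import all_boot all_order all_algebra.
From mathcomp Require Import reals.
From mathcomp Require Import mpoly.
Set Implicit Arguments. Unset Strict Implicit. Unset Printing Implicit Defensive.
Import Order.TTheory GRing.Theory Num.Theory.
Local Open Scope ring_scope.

Record quat (R : realType) := Quat { qRe : R; qIi : R; qIj : R; qIk : R }.

Section Quat.
Variable R : realType.
Definition qconst (a : R) : quat R := Quat a 0 0 0.
Definition qadd (a b : quat R) : quat R :=
  Quat (qRe a + qRe b) (qIi a + qIi b) (qIj a + qIj b) (qIk a + qIk b).
Definition qopp (a : quat R) : quat R :=
  Quat (- qRe a) (- qIi a) (- qIj a) (- qIk a).
(* Hamilton product: i^2=j^2=k^2=ijk=-1, ij=-ji=k, jk=-kj=i, ki=-ik=j. *)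
Definition qmul (a b : quat R) : quat R :=
  Quat (qRe a * qRe b - qIi a * qIi b - qIj a * qIj b - qIk a * qIk b)
       (qRe a * qIi b + qIi a * qRe b + qIj a * qIk b - qIk a * qIj b)
       (qRe a * qIj b - qIi a * qIk b + qIj a * qRe b + qIk a * qIi b)
       (qRe a * qIk b + qIi a * qIj b - qIj a * qIi b + qIk a * qRe b).
End Quat.

Definition fadd (R : realType) (f g : quat R -> quat R) := fun x => qadd (f x) (g x).
Definition fmul (R : realType) (f g : quat R -> quat R) := fun x => qmul (f x) (g x).
Definition fopp (R : realType) (f : quat R -> quat R) := fun x => qopp (f x).
Definition fzero (R : realType) : quat R -> quat R := fun _ => Quat 0 0 0 0.

(* H_1[X]: the smallest subring of H^H containing X (identity) and all
   constant maps, given as an inductive closure. *)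
Inductive inH1 (R : realType) : (quat R -> quat R) -> Prop :=
  | inH1_const (a : quat R) : inH1 (fun _ => a)
  | inH1_X : inH1 (fun x => x)
  | inH1_add f g : inH1 f -> inH1 g -> inH1 (fadd f g)
  | inH1_opp f : inH1 f -> inH1 (fopp f)
  | inH1_mul f g : inH1 f -> inH1 g -> inH1 (fmul f g).

(* The real four-variate function  ~f0^2 + ~f1^2 + ~f2^2 + ~f3^2,
   with variables v 0, v 1, v 2, v 3 standing for X0, X1, X2, X3. *)
Definition sumsq (R : realType) (f : quat R -> quat R) (v : 'I_4 -> R) : R :=
  let y := f (Quat (v 0%R) (v 1%R) (v 2%R) (v 3%R)) in
  qRe y ^+ 2 + qIi y ^+ 2 + qIj y ^+ 2 + qIk y ^+ 2.

(* g : R^4 -> R is (the function of) a real polynomial P of total degree d,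
   with d = None standing for deg 0 = -oo.  (msize P = 1 + total degree,
   and msize 0 = 0.) *)
Definition poly_fun_deg (R : realType) (g : ('I_4 -> R) -> R) (d : option nat) :=
  exists P : {mpoly R[4]},
    (forall v, P.@[v] = g v) /\
    d = (if P == 0 then None else Some (msize P).-1).

(* deg(f) = 1/2 deg(~f0^2+...+~f3^2), as a rational (None = -oo). *)
Definition degH (R : realType) (f : quat R -> quat R) (d : option rat) :=
  exists t, poly_fun_deg (sumsq f) t /\ d = omap (fun n : nat => n%:R / 2) t.

(* Addition on Z u {-oo} (here on rat u {-oo}), -oo absorbing. *)
Definition oadd (a b : option rat) : option rat :=
  match a, b with Some x, Some y => Some (x + y) | _, _ => None end.

(* The four coordinates of a map in H_1[X] are real polynomials, so the sum of
   their squares N(f) is a real polynomial.  The quaternion norm is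
   multiplicative (Euler's four-square identity), hence N(pq) = N(p) N(q), and
   total degree is additive on products of nonzero real polynomials; halving
   gives deg(pq) = deg(p) + deg(q).  For integrality, order monomials by total
   degree first: the leading monomial of a nonzero square has even degree and a
   positive coefficient, so in a sum of squares the leading terms cannot cancel
   and the total degree of N(p) is even. *)
From HB Require Import structures.
From mathcomp Require Import all_boot all_order all_algebra.
From mathcomp Require Import reals mpoly ring lra.
From Stdlib Require Import Classical FunctionalExtensionality.
Set Implicit Arguments. Unset Strict Implicit. Unset Printing Implicit Defensive.
Import Order.TTheory GRing.Theory Num.Theory.
Local Open Scope ring_scope.

Section EvenLeadingTerm.
Variables (n : nat) (R : realDomainType).
Implicit Types S T : {mpoly R[n]}.

Definition pos_even_lead S :=
  (S == 0) || ((0 < S@_(mlead S)) && ~~ odd (mdeg (mlead S))).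

Lemma pos_even_lead_sqr S : pos_even_lead (S * S).
Proof.
rewrite /pos_even_lead; have [->|nzS] := eqVneq S 0; first by rewrite mul0r eqxx.
rewrite (negbTE (mulf_neq0 nzS nzS)) /= mleadM // mleadcM mdegD addnn odd_double.
by rewrite andbT -expr2 lt_def sqr_ge0 andbT expf_neq0 // mleadc_eq0.
Qed.

Lemma pos_even_leadD S T :
  pos_even_lead S -> pos_even_lead T -> pos_even_lead (S + T).
Proof.
have [->|nzS] := eqVneq S 0; first by rewrite add0r.
have [->|nzT] := eqVneq T 0; first by rewrite addr0.
rewrite /pos_even_lead (negbTE nzS) (negbTE nzT) /= => /andP[pS eS] /andP[pT eT].
apply/orP; right; case: (ltgtP (mlead S) (mlead T)) => [lt|lt|eq].
- by rewrite mleadDr // mcoeffD mcoeff_gt_mlead // add0r pT.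
- by rewrite mleadDl // mcoeffD (mcoeff_gt_mlead lt) addr0 pS.
have pST : 0 < (S + T)@_(mlead S) by rewrite mcoeffD {2}eq ltr_wpDr // ltW.
suff -> : mlead (S + T) = mlead S by rewrite pST eS.
apply/le_anti/andP; split; first by have := mleadD_le S T; rewrite -eq joinxx.
by apply: msupp_le_mlead; rewrite -[_ \in _]negbK -mcoeff_eq0 gt_eqF.
Qed.

Lemma pos_even_lead_msize S : pos_even_lead S -> S != 0 -> ~~ odd (msize S).-1.
Proof. by case/orP=> [->//|/andP[_ e]] nzS; rewrite -mlead_deg. Qed.

End EvenLeadingTerm.

Section HalfDegree.
Variables (n : nat) (R : idomainType).
Implicit Types S T : {mpoly R[n]}.

Definition half_deg S : option rat :=
  if S == 0 then None else Some ((msize S).-1%:R / 2).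

Lemma half_degM S T : half_deg (S * T) = oadd (half_deg S) (half_deg T).
Proof.
rewrite /half_deg; have [->|nzS] := eqVneq S 0; first by rewrite mul0r eqxx.
have [->|nzT] := eqVneq T 0; first by rewrite mulr0 eqxx.
rewrite (negbTE (mulf_neq0 nzS nzT)) /= msizeM // -mulrDl -natrD.
have sS : (0 < msize S)%N by rewrite lt0n msize_poly_eq0.
have sT : (0 < msize T)%N by rewrite lt0n msize_poly_eq0.
by rewrite -(prednK sS) -(prednK sT) addSn addnS.
Qed.

End HalfDegree.

Lemma half_deg_int (n : nat) (R : realDomainType) (S : {mpoly R[n]}) (r : rat) :
  pos_even_lead S -> half_deg S = Some r -> r \is a Num.int.
Proof.
rewrite /half_deg; case: eqVneq => // nzS ev [<-].
rewrite -[(msize S).-1]odd_double_half (negbTE (pos_even_lead_msize ev nzS)).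
by rewrite add0n -muln2 natrM mulfK.
Qed.

Section QuaternionMaps.
Variable R : realType.
Implicit Types (a b : quat R) (f g : quat R -> quat R) (v : 'I_4 -> R).

Definition qnorm2 a := qRe a ^+ 2 + qIi a ^+ 2 + qIj a ^+ 2 + qIk a ^+ 2.

Lemma qnorm2M a b : qnorm2 (qmul a b) = qnorm2 a * qnorm2 b.
Proof. by case: a => a0 a1 a2 a3; case: b => b0 b1 b2 b3; rewrite /qnorm2 /=; ring. Qed.

Lemma qnorm2_eq0 a : qnorm2 a = 0 -> a = Quat 0 0 0 0.
Proof.
case: a => a0 a1 a2 a3; rewrite /qnorm2 /= => N0.
have ge0_0 := sqr_ge0 a0; have ge0_1 := sqr_ge0 a1.
have ge0_2 := sqr_ge0 a2; have ge0_3 := sqr_ge0 a3.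
have /eqP : a0 ^+ 2 = 0 by lra.
have /eqP : a1 ^+ 2 = 0 by lra.
have /eqP : a2 ^+ 2 = 0 by lra.
have /eqP : a3 ^+ 2 = 0 by lra.
by rewrite !sqrf_eq0 => /eqP-> /eqP-> /eqP-> /eqP->.
Qed.

Definition qpoint v : quat R := Quat (v 0%R) (v 1%R) (v 2%R) (v 3%R).

Definition qcoords a : 'I_4 -> R := fun i => nth 0 [:: qRe a; qIi a; qIj a; qIk a] i.

Lemma qcoordsK : cancel qcoords qpoint.
Proof. by case. Qed.

Lemma sumsqE f v : sumsq f v = qnorm2 (f (qpoint v)).
Proof. by []. Qed.

Lemma sumsq_fmul f g v : sumsq (fmul f g) v = sumsq f v * sumsq g v.
Proof. exact: qnorm2M. Qed.

Definition represents (S : {mpoly R[4]}) (h : ('I_4 -> R) -> R) :=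
  forall v, S.@[v] = h v.

Lemma degH_half_deg f S : represents S (sumsq f) -> degH f (half_deg S).
Proof.
move=> hS; exists (if S == 0 then None else Some (msize S).-1).
by split; [exists S | rewrite /half_deg; case: eqP].
Qed.

Lemma degH_represents f d :
  degH f d -> exists2 S, represents S (sumsq f) & d = half_deg S.
Proof.
by case=> _ [[S [hS ->]] ->]; exists S => //; rewrite /half_deg; case: eqP.
Qed.

Lemma represents_sumsq_eq0 f : represents 0 (sumsq f) -> f = @fzero R.
Proof.
move=> h0; apply: functional_extensionality => x; rewrite -[x]qcoordsK.
by apply: qnorm2_eq0; rewrite -sumsqE -h0 meval0.
Qed.

Lemma inH1_mpoly_coords f : inH1 f ->
  exists a b c d : {mpoly R[4]},
    forall v, f (qpoint v) = Quat a.@[v] b.@[v] c.@[v] d.@[v].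
Proof.
elim=> [x| |{}f g _ [a1 [b1 [c1 [d1 h1]]]] _ [a2 [b2 [c2 [d2 h2]]]]
         |{}f _ [a1 [b1 [c1 [d1 h1]]]]
         |{}f g _ [a1 [b1 [c1 [d1 h1]]]] _ [a2 [b2 [c2 [d2 h2]]]]].
- exists (qRe x)%:MP, (qIi x)%:MP, (qIj x)%:MP, (qIk x)%:MP => v.
  by rewrite !mevalC; case: x.
- by exists 'X_(0%R), 'X_(1%R), 'X_(2%R), 'X_(3%R) => v; rewrite !mevalXU.
- exists (a1 + a2), (b1 + b2), (c1 + c2), (d1 + d2) => v.
  by rewrite /fadd h1 h2 /= !mevalD.
- exists (- a1), (- b1), (- c1), (- d1) => v.
  by rewrite /fopp h1 /= !mevalN.
- exists (a1 * a2 - b1 * b2 - c1 * c2 - d1 * d2),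
         (a1 * b2 + b1 * a2 + c1 * d2 - d1 * c2),
         (a1 * c2 - b1 * d2 + c1 * a2 + d1 * b2),
         (a1 * d2 + b1 * c2 - c1 * b2 + d1 * a2) => v.
  by rewrite /fmul h1 h2 /= !(mevalD, mevalN, mevalM).
Qed.

Lemma inH1_sumsq_mpoly f : inH1 f ->
  exists2 S : {mpoly R[4]}, represents S (sumsq f) & pos_even_lead S.
Proof.
case/inH1_mpoly_coords=> [a [b [c [d h]]]].
exists (a * a + b * b + c * c + d * d).
  by move=> v; rewrite sumsqE h /qnorm2 /= !(mevalD, mevalM) !expr2.
by rewrite !pos_even_leadD ?pos_even_lead_sqr.
Qed.

Lemma degH_fmul f g df dg :
  degH f df -> degH g dg -> degH (fmul f g) (oadd df dg).
Proof.
case/degH_represents=> S hS ->; case/degH_represents=> T hT ->.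
by rewrite -half_degM; apply: degH_half_deg => v; rewrite mevalM hS hT sumsq_fmul.
Qed.

Lemma degH_fzero : degH (@fzero R) None.
Proof.
have -> : None = half_deg (0 : {mpoly R[4]}) by rewrite /half_deg eqxx.
by apply: degH_half_deg => v; rewrite meval0 sumsqE /qnorm2 /= expr0n /= !addr0.
Qed.

End QuaternionMaps.

Theorem lemma3 (R : realType) :
  (forall p : quat R -> quat R, inH1 p ->
     exists d : option rat, degH p d /\
       (d = None <-> p = @fzero R) /\
       (forall r : rat, d = Some r -> r \is a Num.int)) /\
  (forall (p q : quat R -> quat R) (dp dq : option rat),
     inH1 p -> inH1 q -> degH p dp -> degH q dq ->
     degH (fmul p q) (oadd dp dq)).
Proof.
split=> [p /inH1_sumsq_mpoly[S hS evS] | p q dp dq _ _]; last exact: degH_fmul.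
have [->|nz_p] := classic (p = @fzero R).
  by exists None; split=> //; exact: degH_fzero.
have nzS : S != 0.
  by apply/eqP=> S0; apply/nz_p/represents_sumsq_eq0; rewrite -S0.
exists (half_deg S); split; first exact: degH_half_deg.
split=> [|r]; last exact: half_deg_int.
by rewrite /half_deg (negbTE nzS).
Qed.
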